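(* Let $(X,\rho)$ be a symmetric rack and $A=\{A_x\mid x\in X\}$ a family of abelian groups. Suppose given group isomorphisms $\phi_{x,y}:A_x\to A_{x*y}$, group homomorphisms $\psi_{x,y}:A_y\to A_{x*y}$ and $\eta_x:A_x\to A_{\rho(x)}$, and a map $\sigma$ assigning to each $(x,y)\in X\times X$ an element $\sigma_{x,y}\in A_{x*y}$. Define $\alpha_{x,y}:A_x\times A_y\to A_{x*y}$ and $\beta_x:A_x\to A_{\rho(x)}$ by $$\alpha_{x,y}(a,b)=\phi_{x,y}(a)+\psi_{x,y}(b)+\sigma_{x,y},\qquad \beta_x(a)=\eta_x(a).$$ Then: (A) $(\alpha,\beta)$ is a dynamical cocycle for the symmetric rack $(X,\rho)$ over $A$ if and only if $(A,\phi,\psi,\eta)$ is an $(X,\rho)$-module and $\sigma$ is a symmetric rack 2-cocycle. If moreover $(X,\rho)$ is a symmetric quandle, then $(\alpha,\beta)$ is a dynamical cocycle for $(X,\rho)$ over $A$ if and only if $(A,\phi,\psi,\eta)$ is an $(X,\rho)$-module (for the symmetric quandle, i.e. including (M9)) and $\sigma$ is a symmetric quandle 2-cocycle. (B) Let $\sigma'$ be another symmetric rack (respectively, quandle) 2-cocycle and $(\alpha',\beta')$ the pair defined from $\sigma'$ in the same way. If $\sigma$ and $\sigma'$ are cohomologous, then $(\alpha,\beta)$ and $(\alpha',\beta')$ are cohomologous.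
   Context: A rack is a set $X$ with binary operation $*$ such that each $x\mapsto x*y$ is bijective (inverse $x\mapsto x*^{-1}y$) and $(x*y)*z=(x*z)*(y*z)$; a quandle also satisfies $x*x=x$. A good involution is $\rho:X\to X$ with $\rho^2=\mathrm{id}$, $\rho(x*y)=\rho(x)*y$, $x*\rho(y)=x*^{-1}y$; $(X,\rho)$ is a symmetric rack (quandle). $(X,\rho)$-module: data $(A,\phi,\psi,\eta)$ as in the claim satisfying, for all $x,y,z\in X$, $a\in A_z$, $b\in A_y$: (M1) $\phi_{x*y,z}\phi_{x,y}=\phi_{x*z,y*z}\phi_{x,z}$; (M2) $\phi_{x*y,z}\psi_{x,y}=\psi_{x*z,y*z}\phi_{y,z}$; (M3) $\eta_{\rho(x)}\eta_x=\mathrm{id}$; (M4) $\eta_{x*y}\phi_{x,y}=\phi_{\rho(x),y}\eta_x$; (M5) $\psi_{\rho(x),y}=\eta_{x*y}\psi_{x,y}$; (M6) $\phi_{x*^{-1}y,y}\phi_{x,\rho(y)}=\mathrm{id}$; (M7) $\psi_{x*y,z}(a)=\phi_{x*z,y*z}\psi_{x,z}(a)+\psi_{x*z,y*z}\psi_{y,z}(a)$; (M8) $\phi_{x*^{-1}y,y}\psi_{x,\rho(y)}(\eta_y(b))=-\psi_{x*\rho(y),y}(b)$. For a symmetric quandle one additionally requires (M9) $\phi_{x,x}(a)+\psi_{x,x}(a)=a$ for all $x$, $a\in A_x$. Symmetric rack 2-cocycle: a map $\sigma$ with $\sigma_{x,y}\in A_{x*y}$ such that for all $x,y,z$: (F1)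 $\sigma_{x*y,z}+\phi_{x*y,z}(\sigma_{x,y})=\phi_{x*z,y*z}(\sigma_{x,z})+\sigma_{x*z,y*z}+\psi_{x*z,y*z}(\sigma_{y,z})$; (F2) $\sigma_{\rho(x),y}=\eta_{x*y}(\sigma_{x,y})$; (F3) $\phi_{x*\rho(y),y}(\sigma_{x,\rho(y)})=-\sigma_{x*\rho(y),y}$. A symmetric quandle 2-cocycle additionally satisfies $\sigma_{x,x}=0$ for all $x$. Two such 2-cocycles $\sigma,\sigma'$ are cohomologous if there is $\tau$ with $\tau(x)\in A_x$, $\eta_x(\tau(x))=\tau(\rho(x))$ and $\sigma_{x,y}-\sigma'_{x,y}=\phi_{x,y}(\tau(x))-\tau(x*y)+\psi_{x,y}(\tau(y))$ for all $x,y$. Dynamical cocycle of $(X,\rho)$ over a family of sets $S=\{S_x\}$: families of maps $\alpha_{x,y}:S_x\times S_y\to S_{x*y}$, $\beta_x:S_x\to S_{\rho(x)}$ such that for all $x,y,z$, $s\in S_x,t\in S_y,w\in S_z$ (writing $\alpha_{x,y}(t)(s)=\alpha_{x,y}(s,t)$): (1) $\alpha_{x,y}(t)$ is a bijection $S_x\to S_{x*y}$; (2) $\alpha_{x*y,z}(\alpha_{x,y}(s,t),w)=\alpha_{x*z,y*z}(\alpha_{x,z}(s,w),\alpha_{y,z}(t,w))$; (3) $\alpha_{\rho(x),y}(\beta_x(s),t)=\beta_{x*y}(\alpha_{x,y}(s,t))$; (4) $\beta_{\rho(x)}\beta_x(s)=s$; (5) $\alpha_{x,\rho(y)}(\beta_y(t))(s)=(\alpha_{x*^{-1}y,y}(t))^{-1}(s)$;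 and for a symmetric quandle also (6) $\alpha_{x,x}(s,s)=s$. Two dynamical cocycles $(\alpha,\beta),(\alpha',\beta')$ over $S$ are cohomologous if there are permutations $\gamma_x$ of $S_x$ with $\alpha'_{x,y}(s,t)=\gamma_{x*y}(\alpha_{x,y}(\gamma_x^{-1}(s),\gamma_y^{-1}(t)))$ and $\beta'_x(s)=\gamma_{\rho(x)}(\beta_x(\gamma_x^{-1}(s)))$. *)

From HB Require Import structures.
From mathcomp Require Import all_boot all_algebra.
Unset Printing Implicit Defensive.
Import GRing.Theory.
Local Open Scope ring_scope.

Definition tr (X : Type) (S : X -> Type) (x y : X) (e : x = y) (a : S x) : S y :=
  @eq_rect X x S a y e.
Arguments tr {X} S {x y} e a.

Definition deq (X : Type) (S : X -> Type) (x y : X) (a : S x) (b : S y) : Prop :=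
  forall e : x = y, tr S e a = b.
Arguments deq {X} S {x y} a b.

(* Rack: op = *, opinv = *^{-1}, the inverse of the right translation x |-> x*y. *)
Definition is_rack (X : Type) (op opinv : X -> X -> X) : Prop :=
  (forall x y : X, op (opinv x y) y = x) /\ (forall x y, opinv (op x y) y = x) /\
  (forall x y z : X, op (op x y) z = op (op x z) (op y z)).

Definition is_quandle (X : Type) (op : X -> X -> X) : Prop := forall x, op x x = x.

Definition good_involution (X : Type) (op opinv : X -> X -> X) (rho : X -> X) : Prop :=
  (forall x, rho (rho x) = x) /\ (forall x y : X, rho (op x y) = op (rho x) y) /\
  (forall x y : X, op x (rho y) = opinv x y).

Definition is_hom (G H : zmodType) (f : G -> H) : Prop := forall a b, f (a + b) = f a + f b.

Section Defs.
Variables (X : Type) (op opinv : X -> X -> X) (rho : X -> X) (A : X -> zmodType).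
Let AT := fun z => (A z : Type).
Variables (phi : forall x y, A x -> A (op x y)) (psi : forall x y, A y -> A (op x y)) (eta : forall x, A x -> A (rho x)).

Definition module_rack : Prop :=
  (forall (x y z : X) (a : A x),
      deq AT (phi (op x y) z (phi x y a)) (phi (op x z) (op y z) (phi x z a))) /\
  (forall (x y z : X) (b : A y),
      deq AT (phi (op x y) z (psi x y b)) (psi (op x z) (op y z) (phi y z b))) /\
  (forall (x : X) (a : A x), deq AT (eta (rho x) (eta x a)) a) /\
  (forall (x y : X) (a : A x),
      deq AT (eta (op x y) (phi x y a)) (phi (rho x) y (eta x a))) /\
  (forall (x y : X) (b : A y), deq AT (psi (rho x) y b) (eta (op x y) (psi x y b))) /\
  (forall (x y : X) (a : A x) (e : op x (rho y) = opinv x y),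
      deq AT (phi (opinv x y) y (tr AT e (phi x (rho y) a))) a) /\
  (forall (x y z : X) (a : A z),
      deq AT (psi (op x y) z a)
        (phi (op x z) (op y z) (psi x z a) + psi (op x z) (op y z) (psi y z a))) /\
  (forall (x y : X) (b : A y) (e : op x (rho y) = opinv x y),
      deq AT (phi (opinv x y) y (tr AT e (psi x (rho y) (eta y b))))
             (- psi (op x (rho y)) y b)).

Definition module_quandle : Prop :=
  module_rack /\ (forall (x : X) (a : A x), deq AT (phi x x a + psi x x a) a).

Variable sigma : forall x y, A (op x y).

Definition cocycle_rack : Prop :=
  (forall x y z : X,
      deq AT (sigma (op x y) z + phi (op x y) z (sigma x y))
        (phi (op x z) (op y z) (sigma x z) + sigma (op x z) (op y z)
         + psi (op x z) (op y z) (sigma y z))) /\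
  (forall x y : X, deq AT (sigma (rho x) y) (eta (op x y) (sigma x y))) /\
  (forall x y : X,
      phi (op x (rho y)) y (sigma x (rho y)) = - sigma (op x (rho y)) y).

Definition cocycle_quandle : Prop := cocycle_rack /\ (forall x, sigma x x = 0).

Definition cohomologous (sigma' : forall x y, A (op x y)) : Prop :=
  exists tau : forall x, A x,
    (forall x, eta x (tau x) = tau (rho x)) /\
    (forall x y : X, sigma x y - sigma' x y
                 = phi x y (tau x) - tau (op x y) + psi x y (tau y)).

Definition alpha_of : forall x y, A x -> A y -> A (op x y) :=
  fun x y a b => phi x y a + psi x y b + sigma x y.

End Defs.

Section Dyn.
Variables (X : Type) (op opinv : X -> X -> X) (rho : X -> X) (S : X -> Type).

(* Dynamical cocycle; alpha x y s t stands for alpha_{x,y}(s,t) = alpha_{x,y}(t)(s). *)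
Definition dyn_cocycle_rack (alpha : forall x y, S x -> S y -> S (op x y))
    (beta : forall x, S x -> S (rho x)) : Prop :=
  (forall (x y : X) (t : S y), bijective (fun s : S x => alpha x y s t)) /\
  (forall (x y z : X) (s : S x) (t : S y) (w : S z),
      deq S (alpha (op x y) z (alpha x y s t) w)
            (alpha (op x z) (op y z) (alpha x z s w) (alpha y z t w))) /\
  (forall (x y : X) (s : S x) (t : S y),
      deq S (alpha (rho x) y (beta x s) t) (beta (op x y) (alpha x y s t))) /\
  (forall (x : X) (s : S x), deq S (beta (rho x) (beta x s)) s) /\
  (* (5): alpha_{x,rho y}(beta_y t) is the two-sided inverse of alpha_{x*^{-1}y,y}(t),
     fibres being identified via x*rho(y) = x*^{-1}y and (x*^{-1}y)*y = x *)
  (forall (x y : X) (t : S y),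
      (forall (e : op x (rho y) = opinv x y) (s : S x),
          deq S (alpha (opinv x y) y (tr S e (alpha x (rho y) s (beta y t))) t) s) /\
      (forall (e : op (opinv x y) y = x) (u : S (opinv x y)),
          deq S (alpha x (rho y) (tr S e (alpha (opinv x y) y u t)) (beta y t)) u)).

Definition dyn_cocycle_quandle alpha beta : Prop :=
  dyn_cocycle_rack alpha beta /\ (forall (x : X) (s : S x), deq S (alpha x x s s) s).

Definition dyn_cohomologous (alpha alpha' : forall x y, S x -> S y -> S (op x y))
    (beta beta' : forall x, S x -> S (rho x)) : Prop :=
  exists (gamma gammainv : forall x, S x -> S x),
    (forall x, cancel (gamma x) (gammainv x) /\ cancel (gammainv x) (gamma x)) /\
    (forall (x y : X) (s : S x) (t : S y),
        alpha' x y s t = gamma (op x y) (alpha x y (gammainv x s) (gammainv y t))) /\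
    (forall (x : X) (s : S x), beta' x s = gamma (rho x) (beta x (gammainv x s))).

End Dyn.

From Stdlib Require Import ProofIrrelevance.
From HB Require Import structures.
From mathcomp Require Import all_boot all_algebra.
Import GRing.Theory.
Local Open Scope ring_scope.

(* Because phi, psi and eta are additive, both sides of each axiom of a dynamical
   cocycle for alpha(a, b) = phi(a) + psi(b) + sigma, beta = eta are affine functions
   of the free variables.  An identity between affine functions holds everywhere iff
   the constant terms agree and the linear parts agree: the constant terms give the
   2-cocycle conditions (F1)-(F3) (and sigma_{x,x} = 0), the linear parts give the
   module conditions (M1)-(M8) (and (M9)).  Axiom (1) holds because phi_{x,y} is
   bijective, which also turns the left-inverse half of axiom (5) into its
   right-inverse half.  For (B), the translations gamma_x(a) = a + tau(x) conjugate
   (alpha, eta) into (alpha', eta); this only uses additivity, not the module or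
   cocycle conditions. *)

Lemma is_hom0 {G H : zmodType} {f : G -> H} : is_hom G H f -> f 0 = 0.
Proof. by move=> fD; apply: (@addrI _ (f 0)); rewrite -fD !addr0. Qed.

Lemma is_homN {G H : zmodType} {f : G -> H} : is_hom G H f -> {morph f : a / - a}.
Proof. by move=> fD a; apply: (@addrI _ (f a)); rewrite -fD !subrr (is_hom0 fD). Qed.

Section Transport.
Context {X : Type}.
Implicit Types S : X -> Type.

Lemma trKV S x y (e : x = y) : cancel (tr S (esym e)) (tr S e).
Proof. by case: y / e. Qed.

Lemma deq_sym S x y (a : S x) (b : S y) : deq S a b -> deq S b a.
Proof. by move=> ab e; rewrite -(ab (esym e)) trKV. Qed.

Lemma deq_eqP S x (a b : S x) : deq S a b <-> a = b.
Proof. by split=> [/(_ erefl) // | -> e]; rewrite (proof_irrelevance _ e erefl). Qed.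

Lemma deq_bij_can_sym {S p q q' p'} {f : S p -> S q} {g : S q' -> S p'} :
    bijective f -> (forall (e : q = q') s, deq S (g (tr S e (f s))) s) ->
  forall (e : p' = p) v, deq S (f (tr S e (g v))) v.
Proof.
case=> f' _ f'K gfK e v e'; set s := f' (tr S (esym e') v).
have fs : tr S e' (f s) = v by rewrite f'K trKV.
by have := gfK e' s e; rewrite fs => ->.
Qed.

Context {A : X -> zmodType}.
Local Notation trA := (tr (fun z => A z)).
Local Notation deqA := (deq (fun z => A z)).

Lemma trD x y (e : x = y) (a b : A x) : trA e (a + b) = trA e a + trA e b.
Proof. by case: y / e. Qed.

Lemma tr_eq0 x y (e : x = y) (a : A x) : trA e a = 0 <-> a = 0.
Proof. by case: y / e. Qed.

Lemma deq0P {x y} (h : x = y) (a : A x) : deqA a (0 : A y) <-> a = 0.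
Proof. by split=> [/(_ h)/tr_eq0 // | -> e]; apply/tr_eq0. Qed.

Lemma deq_addr_eq0 {x y} (h : x = y) (a b : A x) : deqA (a + b) (0 : A y) <-> a = - b.
Proof.
split=> [/(deq0P h)/eqP | ->]; first by rewrite addr_eq0 => /eqP.
by apply/(deq0P h); rewrite addNr.
Qed.

Lemma deqD {x y} {a c : A x} {b d : A y} : deqA a b -> deqA c d -> deqA (a + c) (b + d).
Proof. by move=> ab cd e; rewrite trD ab cd. Qed.

Lemma deqDr {x y} {a c : A x} {b d : A y} : deqA c d -> deqA (a + c) (b + d) <-> deqA a b.
Proof.
move=> cd; split=> [acbd e | ab]; last exact: deqD.
by apply: (addIr d); rewrite -(acbd e) trD (cd e).
Qed.

Section Affine.
Context {U1 U2 U3 : zmodType} {x y : X}.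

Lemma deq_affine1 {L : U1 -> A x} {R : U1 -> A y} {f g c d} :
    (forall s, L s = f s + c) -> (forall s, R s = g s + d) -> f 0 = 0 -> g 0 = 0 ->
  (forall s, deqA (L s) (R s)) <-> (forall s, deqA (f s) (g s)) /\ deqA c d.
Proof.
move=> Ldef Rdef f0 g0; split=> [LR | [fg cd] s]; last first.
  by rewrite Ldef Rdef; exact: deqD (fg s) cd.
have cd : deqA c d by move: (LR 0); rewrite Ldef Rdef f0 g0 !add0r.
by split=> // s; apply/(deqDr cd); rewrite -Ldef -Rdef.
Qed.

Lemma deq_affine2 {L : U1 -> U2 -> A x} {R : U1 -> U2 -> A y} {f1 f2 g1 g2 c d} :
    (forall s t, L s t = f1 s + f2 t + c) -> (forall s t, R s t = g1 s + g2 t + d) ->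
    f1 0 = 0 -> f2 0 = 0 -> g1 0 = 0 -> g2 0 = 0 ->
  (forall s t, deqA (L s t) (R s t)) <->
  (forall s, deqA (f1 s) (g1 s)) /\ (forall t, deqA (f2 t) (g2 t)) /\ deqA c d.
Proof.
move=> Ldef Rdef f10 f20 g10 g20.
split=> [LR | [fg1 [fg2 cd]] s t]; last first.
  by rewrite Ldef Rdef; exact: deqD (deqD (fg1 s) (fg2 t)) cd.
have cd : deqA c d by move: (LR 0 0); rewrite Ldef Rdef f10 f20 g10 g20 !add0r.
split; [move=> s | split=> // t]; apply/(deqDr cd).
- by move: (LR s 0); rewrite Ldef Rdef f20 g20 !addr0.
- by move: (LR 0 t); rewrite Ldef Rdef f10 g10 !add0r.
Qed.

Lemma deq_affine3 {L : U1 -> U2 -> U3 -> A x} {R : U1 -> U2 -> U3 -> A y}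
    {f1 f2 f3 g1 g2 g3 c d} :
    (forall s t w, L s t w = f1 s + f2 t + f3 w + c) ->
    (forall s t w, R s t w = g1 s + g2 t + g3 w + d) ->
    f1 0 = 0 -> f2 0 = 0 -> f3 0 = 0 -> g1 0 = 0 -> g2 0 = 0 -> g3 0 = 0 ->
  (forall s t w, deqA (L s t w) (R s t w)) <->
  (forall s, deqA (f1 s) (g1 s)) /\ (forall t, deqA (f2 t) (g2 t)) /\
  (forall w, deqA (f3 w) (g3 w)) /\ deqA c d.
Proof.
move=> Ldef Rdef f10 f20 f30 g10 g20 g30.
split=> [LR | [fg1 [fg2 [fg3 cd]]] s t w]; last first.
  by rewrite Ldef Rdef; exact: deqD (deqD (deqD (fg1 s) (fg2 t)) (fg3 w)) cd.
have cd : deqA c d by move: (LR 0 0 0); rewrite Ldef Rdef f10 f20 f30 g10 g20 g30 !add0r.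
split; [move=> s | split; [move=> t | split=> // w]]; apply/(deqDr cd).
- by move: (LR s 0 0); rewrite Ldef Rdef f20 f30 g20 g30 !addr0.
- by move: (LR 0 t 0); rewrite Ldef Rdef f10 f30 g10 g30 add0r addr0 add0r addr0.
- by move: (LR 0 0 w); rewrite Ldef Rdef f10 f20 g10 g20 !add0r.
Qed.

End Affine.
End Transport.

Section AffineDynamicalCocycle.
Variables (X : Type) (op opinv : X -> X -> X) (rho : X -> X) (A : X -> zmodType).
Variables (phi : forall x y, A x -> A (op x y)) (psi : forall x y, A y -> A (op x y)).
Variables (eta : forall x, A x -> A (rho x)) (sigma : forall x y, A (op x y)).
Hypotheses (phi_hom : forall x y, is_hom _ _ (phi x y))
  (psi_hom : forall x y, is_hom _ _ (psi x y)) (eta_hom : forall x, is_hom _ _ (eta x)).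

Local Notation alpha := (alpha_of X op A phi psi sigma).
Local Notation trA := (tr (fun z => A z)).
Local Notation deqA := (deq (fun z => A z)).

Let phiD x y : {morph phi x y : a b / a + b} := phi_hom x y.
Let psiD x y : {morph psi x y : a b / a + b} := psi_hom x y.
Let etaD x : {morph eta x : a b / a + b} := eta_hom x.
Let phi0 x y : phi x y 0 = 0 := is_hom0 (phi_hom x y).
Let psi0 x y : psi x y 0 = 0 := is_hom0 (psi_hom x y).
Let eta0 x : eta x 0 = 0 := is_hom0 (eta_hom x).
Let phiN x y : {morph phi x y : a / - a} := is_homN (phi_hom x y).
Let psiN x y : {morph psi x y : a / - a} := is_homN (psi_hom x y).
Let etaN x : {morph eta x : a / - a} := is_homN (eta_hom x).

Lemma alpha_bijective : (forall x y, bijective (phi x y)) ->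
  forall x y t, bijective (fun s => alpha x y s t).
Proof.
move=> phi_bij x y t; have [phi' phiK phiK'] := phi_bij x y.
exists (fun v => phi' (v - sigma x y - psi x y t)) => s; rewrite /alpha_of.
  by rewrite !addrK phiK.
by rewrite phiK' !subrK.
Qed.

Lemma alpha_selfdistributive_iff x y z :
  (forall s t w, deqA (alpha (op x y) z (alpha x y s t) w)
                      (alpha (op x z) (op y z) (alpha x z s w) (alpha y z t w))) <->
  (forall a, deqA (phi (op x y) z (phi x y a)) (phi (op x z) (op y z) (phi x z a))) /\
  (forall b, deqA (phi (op x y) z (psi x y b)) (psi (op x z) (op y z) (phi y z b))) /\
  (forall a, deqA (psi (op x y) z a)
                  (phi (op x z) (op y z) (psi x z a) + psi (op x z) (op y z) (psi y z a))) /\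
  deqA (sigma (op x y) z + phi (op x y) z (sigma x y))
       (phi (op x z) (op y z) (sigma x z) + sigma (op x z) (op y z)
        + psi (op x z) (op y z) (sigma y z)).
Proof.
apply: deq_affine3 => [s t w | s t w | | | | | |]; rewrite ?(phi0, psi0, addr0) //.
  by rewrite /alpha_of !phiD (ACl (1*2*4*(5*3))).
by rewrite /alpha_of !phiD !psiD (AC (3*3*1) (1*4*(2*5)*(3*7*6))).
Qed.

Lemma alpha_eta_iff x y :
  (forall s t, deqA (alpha (rho x) y (eta x s) t) (eta (op x y) (alpha x y s t))) <->
  (forall a, deqA (eta (op x y) (phi x y a)) (phi (rho x) y (eta x a))) /\
  (forall b, deqA (psi (rho x) y b) (eta (op x y) (psi x y b))) /\
  deqA (sigma (rho x) y) (eta (op x y) (sigma x y)).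
Proof.
have nfL s t : alpha (rho x) y (eta x s) t = phi _ y (eta x s) + psi _ y t + sigma _ y by [].
have nfR s t : eta (op x y) (alpha x y s t) =
    eta _ (phi x y s) + eta _ (psi x y t) + eta _ (sigma x y) by rewrite !etaD.
apply: iff_trans (deq_affine2 nfL nfR _ _ _ _) _; rewrite ?(phi0, psi0, eta0) //.
by split=> -[phi_eta psi_eta_sigma]; split=> // a; apply: deq_sym.
Qed.

Lemma alpha_inverse_iff x y u (e : op x (rho y) = u) : op u y = x ->
  (forall s t, deqA (alpha u y (trA e (alpha x (rho y) s (eta y t))) t) s) <->
  (forall a, deqA (phi u y (trA e (phi x (rho y) a))) a) /\
  (forall b, deqA (phi u y (trA e (psi x (rho y) (eta y b)))) (- psi (op x (rho y)) y b)) /\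
  phi (op x (rho y)) y (sigma x (rho y)) = - sigma (op x (rho y)) y.
Proof.
case: u / e => /= h.
have nfL s t : alpha (op x (rho y)) y (alpha x (rho y) s (eta y t)) t =
    phi _ y (phi x _ s) + (phi _ y (psi x _ (eta y t)) + psi _ y t)
    + (phi _ y (sigma x (rho y)) + sigma _ y).
  by rewrite /alpha_of !phiD (ACl (1*(2*4)*(3*5))).
have nfR (s : A x) (t : A y) : s = s + 0 + 0 by rewrite !addr0.
apply: iff_trans (deq_affine2 nfL nfR _ _ _ _) _; rewrite ?(phi0, psi0, eta0, addr0) //.
split=> -[phi_phi [phi_psi phi_sigma]]; split=> //; split.
- by move=> b; apply/deq_eqP/(deq_addr_eq0 h).
- exact/(deq_addr_eq0 h).
- by move=> t; apply/(deq_addr_eq0 h); have /deq_eqP := phi_psi t.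
- exact/(deq_addr_eq0 h).
Qed.

Lemma alpha_idempotent_iff x : op x x = x ->
  (forall s, deqA (alpha x x s s) s) <->
  (forall a, deqA (phi x x a + psi x x a) a) /\ sigma x x = 0.
Proof.
move=> h; have nfL s : alpha x x s s = (phi x x s + psi x x s) + sigma x x by [].
have nfR (s : A x) : s = s + 0 by rewrite addr0.
apply: iff_trans (deq_affine1 nfL nfR _ _) _; rewrite ?(phi0, psi0, addr0) //.
by split=> -[phi_psi sigma_xx]; split=> //; apply/(deq0P h).
Qed.

Lemma dyn_cocycle_rackP :
    is_rack X op opinv -> good_involution X op opinv rho -> (forall x y, bijective (phi x y)) ->
  dyn_cocycle_rack X op opinv rho (fun z => A z) alpha eta <->
  module_rack X op opinv rho A phi psi eta /\ cocycle_rack X op rho A phi psi eta sigma.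
Proof.
move=> [opK _] [_ [_ op_rho]] phi_bij.
have inverseP x y e := alpha_inverse_iff x y (opinv x y) e (opK x y).
split=> [[_ [D2 [D3 [D4 D5]]]] | [[M1 [M2 [M3 [M4 [M5 [M6 [M7 M8]]]]]]] [F1 [F2 F3]]]].
  have selfdist x y z := (alpha_selfdistributive_iff x y z).1 (D2 x y z).
  have etaP x y := (alpha_eta_iff x y).1 (D3 x y).
  have inverse x y e := (inverseP x y e).1 (fun s t => (D5 x y t).1 e s).
  split; do !split.
  - by move=> x y z; case: (selfdist x y z).
  - by move=> x y z; case: (selfdist x y z) => _ [].
  - exact: D4.
  - by move=> x y; case: (etaP x y).
  - by move=> x y; case: (etaP x y) => _ [].
  - by move=> x y a e; case: (inverse x y e).
  - by move=> x y z; case: (selfdist x y z) => _ [_ []].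
  - by move=> x y b e; case: (inverse x y e) => _ [].
  - by move=> x y z; case: (selfdist x y z) => _ [_ [_]].
  - by move=> x y; case: (etaP x y) => _ [_].
  - by move=> x y; case: (inverse x y (op_rho x y)) => _ [_].
split; first exact: alpha_bijective.
split; first by move=> x y z; apply/alpha_selfdistributive_iff.
split; first by move=> x y; apply/alpha_eta_iff.
split=> // x y t.
have left e s := (inverseP x y e).2 (conj (M6 x y ^~ e) (conj (M8 x y ^~ e) (F3 x y))) s t.
split=> //; apply: (deq_bij_can_sym (S := fun z => A z)
  (f := fun s => alpha x (rho y) s (eta y t)) (g := fun u => alpha (opinv x y) y u t)) left.
exact: alpha_bijective.
Qed.

Lemma dyn_cocycle_quandleP :
    is_rack X op opinv -> good_involution X op opinv rho -> (forall x y, bijective (phi x y)) ->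
    is_quandle X op ->
  dyn_cocycle_quandle X op opinv rho (fun z => A z) alpha eta <->
  module_quandle X op opinv rho A phi psi eta /\ cocycle_quandle X op rho A phi psi eta sigma.
Proof.
move=> rack good_rho phi_bij idem; have rackP := dyn_cocycle_rackP rack good_rho phi_bij.
have idemP x := alpha_idempotent_iff x (idem x).
split=> [[/rackP [M C] D6] | [[M M9] [C S0]]].
  by split; split=> // x; have [] := (idemP x).1 (D6 x).
by split=> [|x]; [apply/rackP | apply/idemP].
Qed.

Lemma dyn_cohomologous_of_cohomologous sigma' :
  cohomologous X op rho A phi psi eta sigma sigma' ->
  dyn_cohomologous X op rho (fun z => A z) alpha (alpha_of X op A phi psi sigma') eta eta.
Proof.
case=> tau [eta_tau cob].
exists (fun x a => a + tau x), (fun x a => a - tau x).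
split; first by move=> x; split=> a; rewrite ?addrK ?subrK.
split=> [x y s t | x s]; last by rewrite etaD etaN eta_tau subrK.
rewrite /alpha_of /=.
have -> : sigma' x y = sigma x y - (phi x y (tau x) - tau (op x y) + psi x y (tau y)).
  by rewrite -cob opprB addrC subrK.
by rewrite !phiD !psiD phiN psiN !opprD opprK (AC (2*(1*3)) ((1*4)*(2*6)*3*5)).
Qed.

End AffineDynamicalCocycle.

Theorem theorem4p1 (X : Type) (op opinv : X -> X -> X) (rho : X -> X)
    (A : X -> zmodType)
    (phi : forall x y, A x -> A (op x y)) (psi : forall x y, A y -> A (op x y))
    (eta : forall x, A x -> A (rho x))
    (sigma : forall x y, A (op x y)) :
  is_rack X op opinv -> good_involution X op opinv rho ->
  (forall x y, is_hom _ _ (phi x y) /\ bijective (phi x y)) ->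
  (forall x y, is_hom _ _ (psi x y)) ->
  (forall x, is_hom _ _ (eta x)) ->
  (* (A), symmetric rack *)
  (dyn_cocycle_rack X op opinv rho (fun z => A z) (alpha_of X op A phi psi sigma) eta
   <-> module_rack X op opinv rho A phi psi eta
       /\ cocycle_rack X op rho A phi psi eta sigma) /\
  (* (A), symmetric quandle *)
  (is_quandle X op ->
   (dyn_cocycle_quandle X op opinv rho (fun z => A z) (alpha_of X op A phi psi sigma) eta
    <-> module_quandle X op opinv rho A phi psi eta
        /\ cocycle_quandle X op rho A phi psi eta sigma)) /\
  (* (B), symmetric rack 2-cocycles *)
  (forall sigma' : forall x y, A (op x y),
     module_rack X op opinv rho A phi psi eta ->
     cocycle_rack X op rho A phi psi eta sigma ->
     cocycle_rack X op rho A phi psi eta sigma' ->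
     cohomologous X op rho A phi psi eta sigma sigma' ->
     dyn_cohomologous X op rho (fun z => A z)
       (alpha_of X op A phi psi sigma) (alpha_of X op A phi psi sigma') eta eta) /\
  (* (B), symmetric quandle 2-cocycles *)
  (forall sigma' : forall x y, A (op x y),
     is_quandle X op ->
     module_quandle X op opinv rho A phi psi eta ->
     cocycle_quandle X op rho A phi psi eta sigma ->
     cocycle_quandle X op rho A phi psi eta sigma' ->
     cohomologous X op rho A phi psi eta sigma sigma' ->
     dyn_cohomologous X op rho (fun z => A z)
       (alpha_of X op A phi psi sigma) (alpha_of X op A phi psi sigma') eta eta).
Proof.
move=> rack good_rho phiP psi_hom eta_hom.
have phi_hom x y := (phiP x y).1; have phi_bij x y := (phiP x y).2.
split; first exact: dyn_cocycle_rackP.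
split; first exact: dyn_cocycle_quandleP.
by split=> sigma' *; apply: dyn_cohomologous_of_cohomologous.
Qed.
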